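(* In the connectivity graph model, let $P$ be a path shape between $u$ and $v$ with $k$ turning points $(tp_1,tp_2,\dots,tp_k)$ ordered from $u$ to $v$, and let $\sigma$ be any growth process that grows $P$ from a single node which is the turning point $tp_i$. Then $\sigma$ generates the turning points $tp_{i+1},\dots,tp_k$ in the order $(tp_{i+1},tp_{i+2},\dots,tp_k)$ and the turning points $tp_1,\dots,tp_{i-1}$ in the order $(tp_{i-1},tp_{i-2},\dots,tp_1)$. Moreover, $\sigma$ respects the direction of $P$ at every node: whenever a node that already has a neighbor generates a new node, the direction of the new node from it is the one prescribed by $P$ (so that the final path has at that node the same turn or straight continuation as $P$).
   Context: Shapes. Grid points are integer pairs $(x,y)$; two grid points are adjacent if they are at orthogonal (Manhattan) distance $1$. A shape $S=(V,E)$ is a finite connected graph whose nodes occupy distinct grid points and whose edges join only pairs of nodes occupying adjacent points; shapes are considered up to translation. Growth operations. One node, the anchor $u_0$, is stationary; other nodes move relative to it, and a tree is rooted at $u_0$. A growth operation on a node $u$ toward an adjacent grid point $p$ either (i) if $u$ has no edge to $p$, creates a new node $u'$ at $p$ with edge $uu'$; or (ii) if $p$ is occupied by a node $v$ with $uv\in E$, creates a new node $u'$ at $p$, replaces edge $uv$ by edges $uu',u'v$, and translates by one unit, along the axis of $uv$, the part of the tree hanging from whichever of $u,v$ is farther from $u_0$, away from the other endpoint. In one time step a set of operations is applied concurrently, each node receiving at most one operation and all operations having the same cardinal direction; the displacement of each node is the sum of the unit vectors contributed by the operations on its path to $u_0$. The set is collision-free if no two nodes collide during these motions or end at the same point. Growth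 processes (connectivity graph model). A growth process from an initial shape $S_0$ performs time steps $t=1,2,\dots$, each applying a collision-free set of growth operations to the current shape; no edges are deleted and no edges are created other than by the operations. It grows $S$ from $S_0$ in $t_f$ time steps if the shape obtained after step $t_f$ is $S$. For a path $P=(w_1,\dots,w_n)$, $w_i$ is a turning point if $i\in\{1,n\}$ or $w_{i-1}w_i\perp w_iw_{i+1}$. *)

From Stdlib Require Import ZArith List Reals Arith.
Import ListNotations.

Definition point := (Z * Z)%type.
Definition padd (p q : point) : point := (fst p + fst q, snd p + snd q)%Z.
Definition psub (p q : point) : point := (fst p - fst q, snd p - snd q)%Z.

Definition adjacent (p q : point) : Prop :=
  (Z.abs (fst p - fst q) + Z.abs (snd p - snd q) = 1)%Z.

Definition cardinal (d : point) : Prop :=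
  d = (1, 0)%Z \/ d = (-1, 0)%Z \/ d = (0, 1)%Z \/ d = (0, -1)%Z.

Record config := mkConfig {
  node : nat -> Prop;
  loc  : nat -> point;
  edge : nat -> nat -> Prop
}.

Definition single_node (S : config) (u0 : nat) : Prop :=
  (forall z, node S z <-> z = u0) /\ (forall a b, ~ edge S a b).

(* An operation is a pair (u, u'): the operation on node u creates the new
   node u'.  All operations of a time step share the cardinal direction d;
   the operation on u is toward p = loc u + d.
   [subdiv S d u v]: p is occupied by a neighbour v of u (case (ii)). *)
Definition subdiv (S : config) (d : point) (u v : nat) : Prop :=
  edge S u v /\ loc S v = padd (loc S u) d.

Definition kept_edge (S : config) (d : point) (ops : list (nat * nat))
  (a b : nat) : Prop :=
  edge S a b /\
  ~ (exists a', In (a, a') ops /\ subdiv S d a b) /\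
  ~ (exists b', In (b, b') ops /\ subdiv S d b a).

Definition start_pos (S : config) (ops : list (nat * nat)) (z : nat)
  (p : point) : Prop :=
  (node S z /\ p = loc S z) \/ (exists u, In (u, z) ops /\ p = loc S u).

Definition traj (p q : point) (t : R) : R * R :=
  (IZR (fst p) + t * (IZR (fst q) - IZR (fst p)),
   IZR (snd p) + t * (IZR (snd q) - IZR (snd p)))%R.

(* Displacements are specified
   edge-wise: every untouched edge keeps its vector, every new edge gets
   vector d, and the anchor is stationary; on the (tree) shape this is the
   same as "the displacement of a node is the sum of the unit vectors
   contributed by the operations on its path to u0". *)
Definition step (u0 : nat) (S S' : config) (d : point)
  (ops : list (nat * nat)) : Prop :=
  cardinal d /\
  NoDup (map fst ops) /\
  NoDup (map snd ops) /\
  (forall u u', In (u, u') ops -> node S u /\ ~ node S u') /\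
  (forall z, node S' z <-> node S z \/ exists u, In (u, z) ops) /\
  (forall a b, edge S' a b <->
     kept_edge S d ops a b \/
     (exists u u', In (u, u') ops /\
        ((a = u /\ b = u') \/ (a = u' /\ b = u))) \/
     (exists u u' v, In (u, u') ops /\ subdiv S d u v /\
        ((a = u' /\ b = v) \/ (a = v /\ b = u')))) /\
  loc S' u0 = loc S u0 /\
  (forall a b, kept_edge S d ops a b ->
     psub (loc S' b) (loc S' a) = psub (loc S b) (loc S a)) /\
  (forall u u', In (u, u') ops -> loc S' u' = padd (loc S' u) d) /\
  (forall u u' v, In (u, u') ops -> subdiv S d u v ->
     loc S' v = padd (loc S' u') d) /\
  (forall a b pa pb, a <> b -> node S' a -> node S' b ->
     start_pos S ops a pa -> start_pos S ops b pb ->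
     forall t : R, (0 < t <= 1)%R ->
       traj pa (loc S' a) t <> traj pb (loc S' b) t).

Definition growth_process (u0 T : nat) (S : nat -> config)
  (D : nat -> point) (O : nat -> list (nat * nat)) : Prop :=
  single_node (S 0) u0 /\
  forall s, s < T -> step u0 (S s) (S (Datatypes.S s)) (D s) (O s).

Definition first_time (S : nat -> config) (z s : nat) : Prop :=
  node (S s) z /\ forall s', s' < s -> ~ node (S s') z.

Definition pt (P : list point) (j : nat) : point := nth j P (0, 0)%Z.

Definition path_shape (P : list point) : Prop :=
  1 <= length P /\ NoDup P /\
  forall j, j + 1 < length P -> adjacent (pt P j) (pt P (j + 1)).

Definition realizes (S : config) (P : list point) (c : point) : Prop :=
  (forall z, node S z -> exists j, j < length P /\ loc S z = padd (pt P j) c) /\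
  (forall j, j < length P -> exists z, node S z /\ loc S z = padd (pt P j) c) /\
  (forall z z', node S z -> node S z' -> loc S z = loc S z' -> z = z') /\
  (forall z z', node S z -> node S z' ->
     (edge S z z' <-> exists j, j + 1 < length P /\
        ((loc S z = padd (pt P j) c /\ loc S z' = padd (pt P (j + 1)) c) \/
         (loc S z' = padd (pt P j) c /\ loc S z = padd (pt P (j + 1)) c)))).

Definition dotZ (p q : point) : Z := (fst p * fst q + snd p * snd q)%Z.

Definition turningb (P : list point) (j : nat) : bool :=
  Nat.eqb j 0 || Nat.eqb j (length P - 1) ||
  Z.eqb (dotZ (psub (pt P j) (pt P (j - 1))) (psub (pt P (j + 1)) (pt P j))) 0.

Definition turning_points (P : list point) : list nat :=
  filter (turningb P) (seq 0 (length P)).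

(* tp_m (0-based) as an index into P *)
Definition tp (P : list point) (m : nat) : nat := nth m (turning_points P) 0.

Definition nbr_dir (P : list point) (j : nat) (e : point) : Prop :=
  (0 < j /\ pt P (j - 1) = padd (pt P j) e) \/
  (j + 1 < length P /\ pt P (j + 1) = padd (pt P j) e).

From Stdlib Require Import ZArith List Reals Arith Lia Lra Classical.

(* Every node present at some time survives to the end, so it has a "final
   index": the position in P of its final location.  We prove two invariants,
   backwards from the final time T:
   (A) every edge {a, b} of S_s joins nodes with final indices ka < kb, and P
       runs straight from w_ka to w_kb along the vector of that edge at time s;
   (B) present nodes whose final indices are consecutive among the present
       ones are joined by an edge.
   Both hold at T because S_T is P, and both transfer from S_(s+1) to S_s,
   because a step only inserts new nodes into edges or appends them, all in
   the common direction D s.  Consequently a turning point of P lying between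
   two present nodes is present, and was not created in the last step (either
   way (A) and (B) would make P straight through it).  Since u0 sits at tp_i,
   the node of each turning point exists before the node of the next turning
   point farther from tp_i appears.  Invariant (A) applied to the edges at a
   node also gives the direction statement. *)

Definition popp (p : point) : point := (- fst p, - snd p)%Z.

Ltac psolve := unfold padd, psub, popp, dotZ, cardinal in *;
  repeat match goal with p : point |- _ => destruct p | p : (Z * Z)%type |- _ => destruct p end;
  simpl in *;
  repeat match goal with H : (_, _) = (_, _) |- _ => injection H; clear H; intros end;
  try (f_equal; lia); try lia.

Lemma padd_inj_r (p q c : point) : padd p c = padd q c -> p = q.
Proof. intros; psolve. Qed.

Lemma psub_padd (p e : point) : psub (padd p e) p = e.
Proof. psolve. Qed.

Lemma psub_padd_opp (p e : point) : psub p (padd p e) = popp e.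
Proof. psolve. Qed.

Lemma psub_swap (p q : point) : psub p q = popp (psub q p).
Proof. psolve. Qed.

Lemma padd_psub_translated (p q c : point) : padd p (psub (padd q c) (padd p c)) = q.
Proof. psolve. Qed.

Lemma padd_popp_inv (p p' d : point) : p' = padd p (popp d) -> p = padd p' d.
Proof. intros; subst; psolve. Qed.

Lemma cardinal_not_opp (p d : point) : cardinal d -> padd p d <> padd p (popp d).
Proof.
  intros Hd E; psolve; destruct Hd as [Hc|[Hc|[Hc|Hc]]]; injection Hc; intros; lia.
Qed.

Lemma dotZ_self_zero (e : point) : dotZ e e = 0%Z -> e = (0, 0)%Z.
Proof. intros; psolve; f_equal; nia. Qed.

Lemma padd_origin (p : point) : padd p (0, 0)%Z = p.
Proof. psolve. Qed.

Lemma least_element (Q : nat -> Prop) n : Q n ->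
  exists m, Q m /\ forall j, j < m -> ~ Q j.
Proof.
  induction n as [n IH] using lt_wf_ind; intros Qn.
  destruct (classic (exists j, j < n /\ Q j)) as [(j & Hj & Qj) | Hnone].
  - exact (IH j Hj Qj).
  - exists n; split; [exact Qn|]. intros j Hj Qj; apply Hnone; eauto.
Qed.

Lemma least_above (Q : nat -> Prop) lo hi : Q hi -> lo < hi ->
  exists m, Q m /\ lo < m <= hi /\ forall j, lo < j < m -> ~ Q j.
Proof.
  intros Qhi Hlt.
  destruct (least_element (fun j => lo < j /\ Q j) hi (conj Hlt Qhi))
    as (m & [Hm Qm] & Hmin).
  exists m; repeat split; auto.
  - destruct (Nat.le_gt_cases m hi) as [|Hgt]; [auto|].
    exfalso; exact (Hmin hi Hgt (conj Hlt Qhi)).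
  - intros j Hj Qj; apply (Hmin j); [lia|split; [lia|exact Qj]].
Qed.

Lemma greatest_below (Q : nat -> Prop) lo hi : Q lo -> lo < hi ->
  exists m, Q m /\ lo <= m < hi /\ forall j, m < j < hi -> ~ Q j.
Proof.
  intros Qlo; induction hi as [|h IH]; intros Hlt; [lia|].
  destruct (classic (Q h)) as [Qh | nQh].
  - exists h; repeat split; auto; lia.
  - assert (Hlo : lo < h) by (destruct (Nat.eq_dec lo h); [subst; contradiction|lia]).
    destruct (IH Hlo) as (m & Qm & Hm & Hmax).
    exists m; repeat split; auto; try lia.
    intros j Hj; destruct (Nat.eq_dec j h) as [->|]; auto; apply Hmax; lia.
Qed.

Lemma NoDup_map_snd_functional (l : list (nat * nat)) a a' b :
  NoDup (map snd l) -> In (a, b) l -> In (a', b) l -> a = a'.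
Proof.
  induction l as [|x l IH]; simpl; intros Hnd H1 H2; [contradiction|].
  inversion Hnd as [|y l' Hnotin Hnd']; subst.
  destruct H1 as [H1|H1], H2 as [H2|H2]; subst.
  - injection H2; auto.
  - exfalso; apply Hnotin; exact (in_map snd _ (a', b) H2).
  - exfalso; apply Hnotin; exact (in_map snd _ (a, b) H1).
  - eauto.
Qed.

Lemma edge_fate (S0 : config) (d : point) (ops : list (nat * nat)) a b : edge S0 a b ->
  (exists a', In (a, a') ops /\ subdiv S0 d a b) \/
  (exists b', In (b, b') ops /\ subdiv S0 d b a) \/ kept_edge S0 d ops a b.
Proof.
  intros H.
  destruct (classic (exists a', In (a, a') ops /\ subdiv S0 d a b)); auto.
  destruct (classic (exists b', In (b, b') ops /\ subdiv S0 d b a)); auto.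
  right; right; repeat split; auto.
Qed.

Section Step.
Variables (u0 : nat) (S0 S1 : config) (d : point) (ops : list (nat * nat)).
Hypothesis Hstep : step u0 S0 S1 d ops.

Lemma step_node_old z : node S0 z -> node S1 z.
Proof. intros Hz; destruct Hstep as (_&_&_&_&Hn&_); apply Hn; auto. Qed.

Lemma step_op_nodes u u' : In (u, u') ops -> node S0 u /\ ~ node S0 u'.
Proof. destruct Hstep as (_&_&_&Ho&_); auto. Qed.

Lemma step_node_created u u' : In (u, u') ops -> node S1 u'.
Proof. intros Hin; destruct Hstep as (_&_&_&_&Hn&_); apply Hn; eauto. Qed.

Lemma step_edge_vector_new u u' : In (u, u') ops -> edge S1 u u' /\ loc S1 u' = padd (loc S1 u) d.
Proof.
  intros Hin; destruct Hstep as (_&_&_&_&_&He&_&_&Hnew&_).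
  split; [apply He; right; left; exists u, u'; auto | auto].
Qed.

(* The motion is collision-free at time 1, so distinct nodes end at distinct points. *)
Lemma step_loc_injective a b : node S1 a -> node S1 b -> loc S1 a = loc S1 b -> a = b.
Proof.
  intros Ha Hb Hl. destruct Hstep as (_&_&_&_&Hn&_&_&_&_&_&Hcoll).
  destruct (Nat.eq_dec a b) as [|Hne]; auto. exfalso.
  assert (Hstart : forall z, node S1 z -> exists p, start_pos S0 ops z p).
  { intros z Hz; apply Hn in Hz as [Hz|(u & Hu)].
    - exists (loc S0 z); left; auto.
    - exists (loc S0 u); right; eauto. }
  destruct (Hstart a Ha) as [pa Hpa], (Hstart b Hb) as [pb Hpb].
  apply (Hcoll a b pa pb Hne Ha Hb Hpa Hpb 1%R); [lra|].
  unfold traj; rewrite Hl; f_equal; ring.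
Qed.

Lemma step_edge_old_old a b : node S0 a -> node S0 b -> edge S1 a b -> edge S0 a b.
Proof.
  destruct Hstep as (_&_&_&Ho&_&He&_); intros Ha Hb H.
  apply He in H as [[Hk _]|[(u&u'&Hin&[[-> ->]|[-> ->]])|(u&u'&v&Hin&[Hk _]&[[-> ->]|[-> ->]])]];
    auto; exfalso; apply (Ho _ _ Hin); auto.
Qed.

Section EdgesBetweenNodes.
Hypothesis HS : forall x y, edge S0 x y -> node S0 x /\ node S0 y.

Lemma step_edge_nodes a b : edge S1 a b -> node S1 a /\ node S1 b.
Proof.
  destruct Hstep as (_&_&_&Ho&Hn&He&_); intros H.
  apply He in H as [[Hk _]|[(u&u'&Hin&[[-> ->]|[-> ->]])|(u&u'&v&Hin&[Hk _]&[[-> ->]|[-> ->]])]];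
    split; apply Hn.
  all: first [ left; apply (HS _ _ Hk); fail | left; apply (Ho _ _ Hin); fail | right; eauto ].
Qed.

Lemma step_created_neighbour u n x : In (u, n) ops ->
  edge S1 n x \/ edge S1 x n -> node S0 x /\ (x = u \/ subdiv S0 d u x).
Proof.
  intros Hin H. destruct Hstep as (_&_&Hnd&Ho&_&He&_).
  assert (Hn : ~ node S0 n) by apply (Ho _ _ Hin).
  assert (Hfun : forall u1, In (u1, n) ops -> u1 = u)
    by (intros u1 Hu1; exact (NoDup_map_snd_functional _ _ _ _ Hnd Hu1 Hin)).
  destruct H as [H|H]; apply He in H as
    [[Hk _]|[(u1&u1'&Hin1&[[E1 E2]|[E1 E2]])|(u1&u1'&v&Hin1&Hsd&[[E1 E2]|[E1 E2]])]]; subst.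
  all: try (exfalso; apply Hn; apply (HS _ _ Hk)).
  all: try (exfalso; apply Hn; apply (Ho _ _ Hin1)).
  all: try (exfalso; apply Hn; apply (HS _ _ (proj1 Hsd))).
  all: rewrite (Hfun _ Hin1) in *; split; auto.
  all: first [ apply (Ho _ _ Hin) | apply (HS _ _ (proj1 Hsd)) ].
Qed.
End EdgesBetweenNodes.
End Step.

Lemma pt_injective (P : list point) k k' : NoDup P -> k < length P -> k' < length P ->
  pt P k = pt P k' -> k = k'.
Proof. intros Hnd; apply (proj1 (NoDup_nth P (0, 0)%Z) Hnd). Qed.

Definition straight (P : list point) (k1 k2 : nat) (e : point) : Prop :=
  forall k, k1 <= k < k2 -> pt P (k + 1) = padd (pt P k) e.

Lemma straight_concat P k1 k2 k3 e :
  straight P k1 k2 e -> straight P k2 k3 e -> straight P k1 k3 e.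
Proof. intros H1 H2 k Hk; destruct (Nat.lt_ge_cases k k2); [apply H1|apply H2]; lia. Qed.

Definition turns_at (P : list point) (k : nat) : Prop :=
  dotZ (psub (pt P k) (pt P (k - 1))) (psub (pt P (k + 1)) (pt P k)) = 0%Z.

Lemma straight_no_turn P k1 k2 k e : NoDup P -> k1 < k < k2 -> k2 < length P ->
  straight P k1 k2 e -> ~ turns_at P k.
Proof.
  intros Hnd Hk Hk2 Hs Hturn.
  assert (E1 : pt P k = padd (pt P (k - 1)) e).
  { replace k with (k - 1 + 1) at 1 by lia; apply Hs; lia. }
  assert (E2 : pt P (k + 1) = padd (pt P k) e) by (apply Hs; lia).
  unfold turns_at in Hturn; rewrite E2, E1 in Hturn at 1; rewrite !psub_padd in Hturn.
  apply dotZ_self_zero in Hturn; subst e; rewrite padd_origin in E2.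
  apply (pt_injective P (k + 1) k) in E2; [lia|auto|lia|lia].
Qed.

Lemma filter_seq_increasing (f : nat -> bool) n a :
  (forall x, In x (filter f (seq a n)) -> a <= x) /\
  (forall m1 m2, m1 < m2 < length (filter f (seq a n)) ->
     nth m1 (filter f (seq a n)) 0 < nth m2 (filter f (seq a n)) 0).
Proof.
  revert a; induction n as [|n IH]; intros a; simpl.
  - split; [contradiction|intros m1 m2 H; simpl in H; lia].
  - destruct (IH (S a)) as [Hge Hinc]. destruct (f a); simpl.
    + split.
      * intros x [<-|Hx]; [lia|apply Hge in Hx; lia].
      * intros [|m1] [|m2] H; simpl in *; try lia; [|apply Hinc; lia].
        assert (Hin := nth_In (filter f (seq (S a) n)) 0 (proj2 (Nat.succ_lt_mono _ _) (proj2 H))).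
        apply Hge in Hin; lia.
    + split; auto. intros x Hx; apply Hge in Hx; lia.
Qed.

Lemma tp_spec P m : m < length (turning_points P) ->
  tp P m < length P /\ turningb P (tp P m) = true.
Proof.
  intros H; unfold tp; assert (X := nth_In _ 0 H); unfold turning_points in *.
  apply filter_In in X as [X1 X2]; apply in_seq in X1; split; [lia|auto].
Qed.

Lemma tp_increasing P m1 m2 : m1 < m2 < length (turning_points P) -> tp P m1 < tp P m2.
Proof. apply (proj2 (filter_seq_increasing (turningb P) (length P) 0)). Qed.

Lemma turningb_interior P k : turningb P k = true -> 0 < k -> k + 1 < length P ->
  turns_at P k.
Proof.
  unfold turningb; intros H H1 H2.
  destruct (Nat.eqb_spec k 0); [lia|]; destruct (Nat.eqb_spec k (length P - 1)); [lia|].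
  apply Z.eqb_eq; exact H.
Qed.

Section GrowthToPath.
Variables (P : list point) (u0 T : nat) (Sh : nat -> config)
  (D : nat -> point) (O : nat -> list (nat * nat)) (c : point).
Hypothesis HP : path_shape P.
Hypothesis Hgrowth : growth_process u0 T Sh D O.
Hypothesis Hfinal : realizes (Sh T) P c.

Lemma process_step s : s < T -> step u0 (Sh s) (Sh (S s)) (D s) (O s).
Proof. apply (proj2 Hgrowth). Qed.

Lemma initial_node z : node (Sh 0) z <-> z = u0.
Proof. apply (proj1 Hgrowth). Qed.

Lemma node_persists s s' z : s <= s' <= T -> node (Sh s) z -> node (Sh s') z.
Proof.
  induction s' as [|s' IH]; intros Hs Hz.
  - replace s with 0 in * by lia; exact Hz.
  - destruct (Nat.eq_dec s (S s')) as [->|]; [exact Hz|].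
    apply (step_node_old _ _ _ _ _ (process_step s' ltac:(lia))), IH; [lia|exact Hz].
Qed.

Lemma edge_nodes s x y : s <= T -> edge (Sh s) x y -> node (Sh s) x /\ node (Sh s) y.
Proof.
  revert x y; induction s as [|s IH]; intros x y Hs H.
  - exfalso; exact (proj2 (proj1 Hgrowth) x y H).
  - apply (step_edge_nodes _ _ _ _ _ (process_step s ltac:(lia))); [|exact H].
    intros; apply IH; auto; lia.
Qed.

Lemma loc_injective s a b : s <= T ->
  node (Sh s) a -> node (Sh s) b -> loc (Sh s) a = loc (Sh s) b -> a = b.
Proof.
  destruct s as [|s]; intros Hs Ha Hb Hl.
  - apply initial_node in Ha; apply initial_node in Hb; congruence.
  - exact (step_loc_injective _ _ _ _ _ (process_step s ltac:(lia)) a b Ha Hb Hl).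
Qed.

Definition final_index (k z : nat) : Prop :=
  k < length P /\ loc (Sh T) z = padd (pt P k) c.

Lemma final_index_exists s z : s <= T -> node (Sh s) z -> exists k, final_index k z.
Proof.
  intros Hs Hz; destruct (proj1 Hfinal z (node_persists s T z ltac:(lia) Hz)) as (k & Hk & Hl).
  exists k; split; auto.
Qed.

(* Final indices are unique because P is simple, and determine the node
   because the final shape occupies distinct points. *)
Lemma final_index_unique k k' z : final_index k z -> final_index k' z -> k = k'.
Proof.
  intros [H1 E1] [H2 E2]; rewrite E1 in E2; apply padd_inj_r in E2.
  exact (pt_injective P k k' (proj1 (proj2 HP)) H1 H2 E2).
Qed.

Lemma final_index_injective k z z' : node (Sh T) z -> node (Sh T) z' ->
  final_index k z -> final_index k z' -> z = z'.
Proof.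
  intros H1 H2 [_ E1] [_ E2]; apply (proj1 (proj2 (proj2 Hfinal))); auto; congruence.
Qed.

Definition edges_straight (s : nat) : Prop :=
  forall a b ka kb, edge (Sh s) a b -> final_index ka a -> final_index kb b ->
  (ka < kb /\ straight P ka kb (psub (loc (Sh s) b) (loc (Sh s) a))) \/
  (kb < ka /\ straight P kb ka (psub (loc (Sh s) a) (loc (Sh s) b))).

Definition present (s k : nat) : Prop := exists y, node (Sh s) y /\ final_index k y.

Definition gaps_linked (s : nat) : Prop :=
  forall a b ka kb, node (Sh s) a -> node (Sh s) b ->
  final_index ka a -> final_index kb b -> ka < kb ->
  (forall m, ka < m < kb -> ~ present s m) -> edge (Sh s) a b \/ edge (Sh s) b a.

Lemma edges_straight_final : edges_straight T.
Proof.
  intros a b ka kb He Ia Ib.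
  destruct (edge_nodes T a b ltac:(lia) He) as [Na Nb].
  apply (proj2 (proj2 (proj2 Hfinal)) a b Na Nb) in He as (j & Hj & [[E1 E2]|[E1 E2]]).
  - assert (ka = j) by (apply (final_index_unique ka j a); [|split]; auto; lia).
    assert (kb = j + 1) by (apply (final_index_unique kb (j + 1) b); [|split]; auto).
    subst; left; split; [lia|]; intros k Hk; replace k with j by lia.
    rewrite E1, E2; symmetry; apply padd_psub_translated.
  - assert (kb = j) by (apply (final_index_unique kb j b); [|split]; auto; lia).
    assert (ka = j + 1) by (apply (final_index_unique ka (j + 1) a); [|split]; auto).
    subst; right; split; [lia|]; intros k Hk; replace k with j by lia.
    rewrite E1, E2; symmetry; apply padd_psub_translated.
Qed.

Lemma gaps_linked_final : gaps_linked T.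
Proof.
  intros a b ka kb Na Nb Ia Ib Hlt Hgap.
  destruct (Nat.eq_dec kb (ka + 1)) as [->|Hne].
  - left; apply (proj2 (proj2 (proj2 Hfinal)) a b Na Nb).
    exists ka; split; [apply Ib|]; left; split; [apply Ia|apply Ib].
  - exfalso; destruct Ib as [Hkb _].
    destruct (proj1 (proj2 Hfinal) (ka + 1) ltac:(lia)) as (w & Nw & Lw).
    apply (Hgap (ka + 1)); [lia|]; exists w; split; [|split]; auto; lia.
Qed.

(* A subdivided edge a-b of S_s became a-a'-b, both edges with vector D s;
   by (A) at time s+1 both stretches of P point the same way (P cannot
   double back), so P is straight from a to b along D s = loc b - loc a. *)
Lemma edges_straight_subdivided s a a' b ka kb : s < T ->
  edges_straight (S s) -> In (a, a') (O s) -> subdiv (Sh s) (D s) a b ->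
  final_index ka a -> final_index kb b ->
  (ka < kb /\ straight P ka kb (psub (loc (Sh s) b) (loc (Sh s) a))) \/
  (kb < ka /\ straight P kb ka (psub (loc (Sh s) a) (loc (Sh s) b))).
Proof.
  intros Hs HA Hin Hsd Ia Ib.
  destruct (process_step s Hs) as (Hcard&_&_&_&_&He&_&_&_&Hsub&_).
  destruct (step_edge_vector_new _ _ _ _ _ (process_step s Hs) a a' Hin) as [E1 L1].
  assert (E2 : edge (Sh (S s)) a' b) by (apply He; right; right; exists a, a', b; auto).
  assert (L2 : loc (Sh (S s)) b = padd (loc (Sh (S s)) a') (D s)) by (eapply Hsub; eauto).
  destruct (final_index_exists (S s) a' ltac:(lia)
    (step_node_created _ _ _ _ _ (process_step s Hs) a a' Hin)) as [ka' Ia'].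
  rewrite (proj2 Hsd), psub_padd, psub_padd_opp.
  destruct (HA a a' ka ka' E1 Ia Ia') as [[H1 S1]|[H1 S1]];
  destruct (HA a' b ka' kb E2 Ia' Ib) as [[H2 S2]|[H2 S2]];
  rewrite ?L1, ?L2, ?psub_padd, ?psub_padd_opp in S1;
  rewrite ?L2, ?psub_padd, ?psub_padd_opp in S2.
  - left; split; [lia|]; eapply straight_concat; eauto.
  - exfalso. assert (X1 := S1 (ka' - 1) ltac:(lia)). assert (X2 := S2 (ka' - 1) ltac:(lia)).
    replace (ka' - 1 + 1) with ka' in * by lia. rewrite X1 in X2.
    exact (cardinal_not_opp _ _ Hcard X2).
  - exfalso. assert (X1 := S1 ka' ltac:(lia)). assert (X2 := S2 ka' ltac:(lia)).
    rewrite X1 in X2. exact (cardinal_not_opp _ _ Hcard (eq_sym X2)).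
  - right; split; [lia|]; eapply straight_concat; eauto.
Qed.

(* (A) transfers backwards: kept edges keep their vector, subdivided edges
   are handled above. *)
Lemma edges_straight_back s : s < T -> edges_straight (S s) -> edges_straight s.
Proof.
  intros Hs HA a b ka kb He Ia Ib.
  pose proof (process_step s Hs) as Hst.
  destruct (edge_fate (Sh s) (D s) (O s) a b He) as [(a'&Hin&Hsd)|[(b'&Hin&Hsd)|Hk]].
  - eapply edges_straight_subdivided; eauto.
  - destruct (edges_straight_subdivided s b b' a kb ka Hs HA Hin Hsd Ib Ia); tauto.
  - destruct Hst as (_&_&_&_&_&Hed&_&Hkept&_).
    rewrite (psub_swap (loc (Sh s) a)), <- (Hkept a b Hk), <- psub_swap.
    apply HA; auto; apply Hed; left; exact Hk.
Qed.

(* (B) transfers backwards: between two consecutive present nodes a, b of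
   S_s, the step inserts at most one new node n, whose neighbours are its
   creator u and possibly the old neighbour of u it was inserted before;
   so a and b were already adjacent. *)
Lemma gaps_linked_back s : s < T -> gaps_linked (S s) -> gaps_linked s.
Proof.
  intros Hs HB a b ka kb Na Nb Ia Ib Hlt Hgap.
  pose proof (process_step s Hs) as Hst.
  assert (HS : forall x y, edge (Sh s) x y -> node (Sh s) x /\ node (Sh s) y)
    by (intros; apply edge_nodes; auto; lia).
  assert (Old : forall z, node (Sh s) z -> node (Sh (S s)) z) by apply (step_node_old _ _ _ _ _ Hst).
  assert (IsB : forall z k, node (Sh s) z -> final_index k z -> ka < k <= kb -> z = b).
  { intros z k Nz Iz Hk. destruct (Nat.eq_dec k kb) as [->|Hne].
    - apply (final_index_injective kb); auto; apply (node_persists s); auto; lia.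
    - exfalso; apply (Hgap k); [lia|exists z; auto]. }
  assert (Hb : present (S s) kb) by (exists b; auto).
  destruct (least_above (present (S s)) ka kb Hb Hlt) as (k1 & (n1 & N1 & I1) & Hk1 & Hmin1).
  assert (E1 : edge (Sh (S s)) a n1 \/ edge (Sh (S s)) n1 a) by (apply (HB a n1 ka k1); auto; lia).
  destruct Hst as (_&_&_&_&Hnodes&_).
  destruct (proj1 (Hnodes n1) N1) as [Old1 | (u & Hu)].
  - rewrite (IsB n1 k1 Old1 I1 Hk1) in E1.
    destruct E1; [left|right]; apply (step_edge_old_old _ _ _ _ _ (process_step s Hs)); auto.
  - assert (Hk1b : k1 < kb).
    { destruct (Nat.eq_dec k1 kb) as [->|]; [|lia]. exfalso.
      rewrite (final_index_injective kb n1 b) in Hu; [|apply (node_persists (S s)); auto; lia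
        |apply (node_persists s); auto; lia|auto|auto].
      exact (proj2 (step_op_nodes _ _ _ _ _ (process_step s Hs) u b Hu) Nb). }
    destruct (least_above (present (S s)) k1 kb Hb Hk1b) as (k2 & (n2 & N2 & I2) & Hk2 & Hmin2).
    assert (E2 : edge (Sh (S s)) n1 n2 \/ edge (Sh (S s)) n2 n1) by (apply (HB n1 n2 k1 k2); auto; lia).
    destruct (step_created_neighbour _ _ _ _ _ (process_step s Hs) HS u n1 n2 Hu E2) as [Old2 Eb].
    destruct (step_created_neighbour _ _ _ _ _ (process_step s Hs) HS u n1 a Hu
      ltac:(destruct E1; auto)) as [_ Ea].
    rewrite (IsB n2 k2 Old2 I2 ltac:(lia)) in Eb.
    destruct Ea as [->|[Ha La]], Eb as [->|[Hb' Lb]].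
    + exfalso; rewrite (final_index_unique ka kb u Ia Ib) in Hlt; lia.
    + left; exact Hb'.
    + right; exact Ha.
    + exfalso. assert (a = b) by (apply (loc_injective s); auto; lia || congruence).
      subst; rewrite (final_index_unique ka kb b Ia Ib) in Hlt; lia.
Qed.

Lemma invariants s : s <= T -> edges_straight s /\ gaps_linked s.
Proof.
  intros Hs; replace s with (T - (T - s)) by lia.
  induction (T - s) as [|n IH].
  - rewrite Nat.sub_0_r; split; [apply edges_straight_final|apply gaps_linked_final].
  - destruct (Nat.le_gt_cases T n) as [Hle|Hgt].
    + replace (T - S n) with (T - n) by lia; exact IH.
    + replace (T - n) with (S (T - S n)) in IH by lia; destruct IH as [HA HB].
      split; [apply edges_straight_back|apply gaps_linked_back]; auto; lia.
Qed.

Lemma edge_straight s a b ka kb : s <= T ->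
  (edge (Sh s) a b \/ edge (Sh s) b a) -> final_index ka a -> final_index kb b -> ka < kb ->
  straight P ka kb (psub (loc (Sh s) b) (loc (Sh s) a)).
Proof.
  intros Hs [E|E] Ia Ib Hlt; destruct (invariants s Hs) as [HA _].
  - destruct (HA a b ka kb E Ia Ib) as [[_ X]|[? _]]; [exact X|lia].
  - destruct (HA b a kb ka E Ib Ia) as [[? _]|[_ X]]; [lia|exact X].
Qed.

Lemma nearest_present s ka k kb : present s ka -> present s kb -> ka < k < kb ->
  exists y1 k1 y2 k2,
    node (Sh s) y1 /\ final_index k1 y1 /\ ka <= k1 < k /\
    node (Sh s) y2 /\ final_index k2 y2 /\ k < k2 <= kb /\
    (forall m, k1 < m < k -> ~ present s m) /\ (forall m, k < m < k2 -> ~ present s m).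
Proof.
  intros Ha Hb Hk.
  destruct (greatest_below (present s) ka k Ha ltac:(lia)) as (k1 & (y1 & N1 & I1) & H1 & M1).
  destruct (least_above (present s) k kb Hb ltac:(lia)) as (k2 & (y2 & N2 & I2) & H2 & M2).
  exists y1, k1, y2, k2; tauto.
Qed.

(* A turning point lying between two present nodes is itself present:
   otherwise the nearest present nodes around it would be adjacent by (B),
   and by (A) P would run straight through it. *)
Lemma turning_point_present s ka k kb : s <= T ->
  present s ka -> present s kb -> ka < k < kb -> turns_at P k -> present s k.
Proof.
  intros Hs Ha Hb Hk Hturn. apply NNPP; intros Hk_absent.
  destruct (nearest_present s ka k kb Ha Hb Hk)
    as (y1 & k1 & y2 & k2 & N1 & I1 & H1 & N2 & I2 & H2 & M1 & M2).
  destruct (invariants s Hs) as [_ HB].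
  assert (E : edge (Sh s) y1 y2 \/ edge (Sh s) y2 y1).
  { apply (HB y1 y2 k1 k2); auto; [lia|]. intros m Hm.
    destruct (Nat.lt_total m k) as [Hlt|[->|Hgt]]; auto; [apply M1|apply M2]; lia. }
  exact (straight_no_turn P k1 k2 k _ (proj1 (proj2 HP)) ltac:(lia) (proj1 I2)
    (edge_straight s y1 y2 k1 k2 Hs E I1 I2 ltac:(lia)) Hturn).
Qed.

(* A turning point lying between two present nodes was not created in the
   last step: its neighbours would be its creator u and the old neighbour of
   u it was inserted before, on opposite sides along the direction D s, so P
   would again run straight through it. *)
Lemma turning_point_not_fresh s w ka k kb : s < T ->
  present (S s) ka -> present (S s) kb -> ka < k < kb -> turns_at P k ->
  node (Sh (S s)) w -> final_index k w -> node (Sh s) w.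
Proof.
  intros Hs Ha Hb Hk Hturn Nw Iw. apply NNPP; intros Hfresh.
  pose proof (process_step s Hs) as Hst.
  assert (HS : forall x y, edge (Sh s) x y -> node (Sh s) x /\ node (Sh s) y)
    by (intros; apply edge_nodes; auto; lia).
  destruct (nearest_present (S s) ka k kb Ha Hb Hk)
    as (y1 & k1 & y2 & k2 & N1 & I1 & H1 & N2 & I2 & H2 & M1 & M2).
  destruct (invariants (S s) Hs) as [_ HB].
  assert (E1 : edge (Sh (S s)) y1 w \/ edge (Sh (S s)) w y1) by (apply (HB y1 w k1 k); auto; lia).
  assert (E2 : edge (Sh (S s)) w y2 \/ edge (Sh (S s)) y2 w) by (apply (HB w y2 k k2); auto; lia).
  assert (S1 := edge_straight (S s) y1 w k1 k Hs E1 I1 Iw ltac:(lia)).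
  assert (S2 := edge_straight (S s) w y2 k k2 Hs E2 Iw I2 ltac:(lia)).
  assert (Hstraight : forall e, straight P k1 k e -> straight P k k2 e -> False).
  { intros e Hs1 Hs2. exact (straight_no_turn P k1 k2 k e (proj1 (proj2 HP)) ltac:(lia)
      (proj1 I2) (straight_concat P k1 k k2 e Hs1 Hs2) Hturn). }
  destruct Hst as (_&_&_&_&Hnodes&_&_&_&Hnew&Hsub&_).
  destruct (proj1 (Hnodes w) Nw) as [|(u & Hu)]; [contradiction|].
  assert (Lw : loc (Sh (S s)) w = padd (loc (Sh (S s)) u) (D s)) by (apply Hnew; auto).
  destruct (step_created_neighbour _ _ _ _ _ (process_step s Hs) HS u w y1 Hu
    ltac:(destruct E1; auto)) as [Old1 [->|Sd1]];
  destruct (step_created_neighbour _ _ _ _ _ (process_step s Hs) HS u w y2 Hu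
    ltac:(destruct E2; auto)) as [Old2 [->|Sd2]].
  - rewrite (final_index_unique k1 k2 u I1 I2) in H1; lia.
  - rewrite (Hsub u w y2 Hu Sd2), psub_padd in S2. rewrite Lw, psub_padd in S1. eauto.
  - rewrite (Hsub u w y1 Hu Sd1), psub_padd_opp in S1. rewrite Lw, psub_padd_opp in S2. eauto.
  - assert (y1 = y2).
    { apply (loc_injective s); auto; [lia|]. rewrite (proj2 Sd1), (proj2 Sd2); reflexivity. }
    subst y2; rewrite (final_index_unique k1 k2 y1 I1 I2) in H1; lia.
Qed.

Lemma generated_before ki k k' z z' s s' : final_index ki u0 ->
  node (Sh T) z -> final_index k z -> node (Sh T) z' -> final_index k' z' ->
  (ki < k < k' \/ k' < k < ki) -> turningb P k = true ->
  first_time Sh z s -> first_time Sh z' s' -> s < s'.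
Proof.
  intros Iu Nz Iz Nz' Iz' Hord Htb [_ Fz] [Gz Gz'].
  assert (Hturn : turns_at P k)
    by (apply turningb_interior; auto; destruct Iz', Iu; lia).
  assert (Hs' : s' <= T)
    by (destruct (Nat.le_gt_cases s' T); auto; exfalso; exact (Gz' T ltac:(lia) Nz')).
  destruct s' as [|s0].
  - apply initial_node in Gz; subst z'.
    rewrite (final_index_unique ki k' u0 Iu Iz') in Hord; lia.
  - assert (Hu : present (S s0) ki)
      by (exists u0; split; auto; apply (node_persists 0); [lia|apply initial_node; auto]).
    assert (Hz' : present (S s0) k') by (exists z'; auto).
    assert (Hbetween : exists lo hi, present (S s0) lo /\ present (S s0) hi /\ lo < k < hi)
      by (destruct Hord; [exists ki, k'|exists k', ki]; auto).
    destruct Hbetween as (lo & hi & Hlo & Hhi & Hk).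
    destruct (turning_point_present (S s0) lo k hi Hs' Hlo Hhi Hk Hturn) as (y & Ny & Iy).
    rewrite (final_index_injective k y z) in Ny; auto; [|apply (node_persists (S s0)); auto].
    assert (Old : node (Sh s0) z) by (apply (turning_point_not_fresh s0 z lo k hi); auto; lia).
    destruct (Nat.le_gt_cases s s0); [lia|]. exfalso; exact (Fz s0 ltac:(lia) Old).
Qed.

Lemma edge_direction s x y j : s <= T -> edge (Sh s) x y -> final_index j x ->
  nbr_dir P j (psub (loc (Sh s) y) (loc (Sh s) x)).
Proof.
  intros Hs E Ix.
  destruct (edge_nodes s x y Hs E) as [Nx Ny].
  destruct (final_index_exists s y Hs Ny) as [ky Iy].
  destruct (invariants s Hs) as [HA _].
  destruct (HA x y j ky E Ix Iy) as [[H St]|[H St]].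
  - right; split; [destruct Iy; lia|]; apply St; lia.
  - left; split; [lia|].
    assert (X := St (j - 1) ltac:(lia)); replace (j - 1 + 1) with j in X by lia.
    rewrite psub_swap in X; apply padd_popp_inv; exact X.
Qed.
End GrowthToPath.

Theorem lemma3p3 (P : list point) (i : nat) (u0 T : nat)
  (Sh : nat -> config) (D : nat -> point) (O : nat -> list (nat * nat))
  (c : point) :
  path_shape P ->
  i < length (turning_points P) ->
  growth_process u0 T Sh D O ->
  realizes (Sh T) P c ->
  loc (Sh T) u0 = padd (pt P (tp P i)) c ->
  (* tp_{i+1}, ..., tp_k are generated in this order *)
  (forall j z z' s s', i < j -> j + 1 < length (turning_points P) ->
     node (Sh T) z -> loc (Sh T) z = padd (pt P (tp P j)) c ->
     node (Sh T) z' -> loc (Sh T) z' = padd (pt P (tp P (j + 1))) c ->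
     first_time Sh z s -> first_time Sh z' s' -> s < s') /\
  (* tp_{i-1}, ..., tp_1 are generated in this order *)
  (forall j z z' s s', j + 1 < i ->
     node (Sh T) z -> loc (Sh T) z = padd (pt P (tp P (j + 1))) c ->
     node (Sh T) z' -> loc (Sh T) z' = padd (pt P (tp P j)) c ->
     first_time Sh z s -> first_time Sh z' s' -> s < s') /\
  (* directions are those prescribed by P *)
  (forall s x x' j, s < T -> In (x, x') (O s) ->
     (exists v, edge (Sh s) x v) ->
     j < length P -> loc (Sh T) x = padd (pt P j) c ->
     nbr_dir P j (D s) /\
     forall v, edge (Sh s) x v -> nbr_dir P j (psub (loc (Sh s) v) (loc (Sh s) x))).
Proof.
  intros HP Hi Hg Hr Hu0.
  pose proof (generated_before P u0 T Sh D O c HP Hg Hr) as Hbefore.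
  pose proof (edge_direction P u0 T Sh D O c HP Hg Hr) as Hdir.
  assert (Iu : final_index P T Sh c (tp P i) u0) by (split; [apply tp_spec|]; auto).
  split; [|split].
  - intros j z z' s s' Hij Hj Nz Lz Nz' Lz' Fz Fz'.
    destruct (tp_spec P j ltac:(lia)) as [Hj1 Htj], (tp_spec P (j + 1) Hj) as [Hj2 _].
    apply (Hbefore (tp P i) (tp P j) (tp P (j + 1)) z z' s s' Iu Nz (conj Hj1 Lz)
      Nz' (conj Hj2 Lz')); auto.
    left; split; apply tp_increasing; lia.
  - intros j z z' s s' Hj Nz Lz Nz' Lz' Fz Fz'.
    destruct (tp_spec P (j + 1) ltac:(lia)) as [Hj1 Htj], (tp_spec P j ltac:(lia)) as [Hj2 _].
    apply (Hbefore (tp P i) (tp P (j + 1)) (tp P j) z z' s s' Iu Nz (conj Hj1 Lz)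
      Nz' (conj Hj2 Lz')); auto.
    right; split; apply tp_increasing; lia.
  - intros s x x' j Hs Hin _ Hj Lx.
    assert (Ix : final_index P T Sh c j x) by (split; auto).
    destruct (step_edge_vector_new _ _ _ _ _ (proj2 Hg s Hs) x x' Hin) as [E L].
    split.
    + assert (X := Hdir (S s) x x' j ltac:(lia) E Ix); rewrite L, psub_padd in X; exact X.
    + intros v Ev; exact (Hdir s x v j ltac:(lia) Ev Ix).
Qed.
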